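(* Let $(\mathscr{E},\mathscr{M})$ be a $\mathscr{V}$-prefactorization-system on a cotensored $\mathscr{V}$-category $\mathscr{B}$ with $\mathscr{M}\subseteq\mathsf{Mono}_\mathscr{V}\mathscr{B}$. Suppose $\mathscr{B}$ has arbitrary $\mathscr{V}$-intersections of $\mathscr{M}$-morphisms and $\mathscr{V}$-pullbacks of $\mathscr{M}$-morphisms along arbitrary morphisms. Then: (1) $(\mathscr{E},\mathscr{M})$ is a $\mathscr{V}$-factorization-system on $\mathscr{B}$; (2) for any class $\Sigma$ of morphisms in $\mathscr{B}$, letting $\mathscr{N}:=\Sigma^{\downarrow_\mathscr{V}}\cap\mathscr{M}$, the pair $(\mathscr{N}^{\uparrow_\mathscr{V}},\mathscr{N})$ is a $\mathscr{V}$-factorization-system on $\mathscr{B}$.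
   Context: $\mathscr{V}$ is a closed symmetric monoidal category (no limits assumed). $\mathsf{Mono}_\mathscr{V}\mathscr{B}$ is the class of $m$ with $\mathscr{B}(A,m)$ mono in $\mathscr{V}$ for all $A$. $\mathscr{V}$-limits are cones sent by every $\mathscr{B}(A,-):\mathscr{B}\to\mathscr{V}$ to limit cones; a $\mathscr{V}$-intersection of a class-indexed family of $\mathscr{V}$-monos with common codomain is its $\mathscr{V}$-fibre-product (wide $\mathscr{V}$-pullback). For $e:A_1\to A_2$, $m:B_1\to B_2$, $e\downarrow_\mathscr{V} m$ means the square formed by $\mathscr{B}(A_2,m)$, $\mathscr{B}(A_1,m)$, $\mathscr{B}(e,B_1)$, $\mathscr{B}(e,B_2)$ is a pullback in $\mathscr{V}$. $\Sigma^{\downarrow_\mathscr{V}}=\{m: e\downarrow_\mathscr{V} m\ \forall e\in\Sigma\}$, $\mathscr{N}^{\uparrow_\mathscr{V}}=\{e: e\downarrow_\mathscr{V} m\ \forall m\in\mathscr{N}\}$. A $\mathscr{V}$-prefactorization-system is a pair $(\mathscr{E},\mathscr{M})$ with $\mathscr{E}^{\downarrow_\mathscr{V}}=\mathscr{M}$, $\mathscr{M}^{\uparrow_\mathscr{V}}=\mathscr{E}$; a $\mathscr{V}$-factorization-system additionally assigns each morphism a factorization $m\cdot e$ with $e\in\mathscr{E}$, $m\in\mathscr{M}$. *)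

Record Cat := {
  ob :> Type;
  hom : ob -> ob -> Type;
  idm : forall A, hom A A;
  cmp : forall A B C, hom B C -> hom A B -> hom A C;
  cmp_assoc : forall A B C D (h : hom C D) (g : hom B C) (f : hom A B),
      cmp A C D h (cmp A B C g f) = cmp A B D (cmp B C D h g) f;
  cmp_id_l : forall A B (f : hom A B), cmp A B B (idm B) f = f;
  cmp_id_r : forall A B (f : hom A B), cmp A A B f (idm A) = f
}.
Arguments hom {c} _ _.
Arguments idm {c} _.
Arguments cmp {c A B C} _ _.
Notation "g ∘ f" := (cmp g f) (at level 40, left associativity).

Definition is_iso {V : Cat} {A B : V} (f : hom A B) : Prop :=
  exists g : hom B A, g ∘ f = idm A /\ f ∘ g = idm B.

Definition is_mono {V : Cat} {A B : V} (f : hom A B) : Prop :=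
  forall X (g h : hom X A), f ∘ g = f ∘ h -> g = h.

Definition is_pullback {V : Cat} {P X Y Z : V}
  (p1 : hom P X) (p2 : hom P Y) (f : hom X Z) (g : hom Y Z) : Prop :=
  f ∘ p1 = g ∘ p2 /\
  forall Q (q1 : hom Q X) (q2 : hom Q Y), f ∘ q1 = g ∘ q2 ->
    exists u : hom Q P, p1 ∘ u = q1 /\ p2 ∘ u = q2 /\
      forall u' : hom Q P, p1 ∘ u' = q1 -> p2 ∘ u' = q2 -> u' = u.

Definition is_wide_pullback {V : Cat} {I : Type} {P Z : V} {X : I -> V}
  (q : hom P Z) (p : forall i, hom P (X i)) (f : forall i, hom (X i) Z) : Prop :=
  (forall i, f i ∘ p i = q) /\
  forall Q (r : hom Q Z) (s : forall i, hom Q (X i)),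
    (forall i, f i ∘ s i = r) ->
    exists u : hom Q P, q ∘ u = r /\ (forall i, p i ∘ u = s i) /\
      forall u' : hom Q P, q ∘ u' = r -> (forall i, p i ∘ u' = s i) -> u' = u.

Record SMC (V : Cat) := {
  tens : V -> V -> V;
  tens_hom : forall A A' B B', hom A A' -> hom B B' -> hom (tens A B) (tens A' B');
  tens_id : forall A B, tens_hom A A B B (idm A) (idm B) = idm (tens A B);
  tens_comp : forall A A' A'' B B' B'' (f : hom A A') (f' : hom A' A'')
      (g : hom B B') (g' : hom B' B''),
      tens_hom A A'' B B'' (f' ∘ f) (g' ∘ g)
      = tens_hom A' A'' B' B'' f' g' ∘ tens_hom A A' B B' f g;
  unit : V;
  assoc : forall A B C, hom (tens (tens A B) C) (tens A (tens B C));
  assoc_inv : forall A B C, hom (tens A (tens B C)) (tens (tens A B) C);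
  assoc_inv_l : forall A B C, assoc_inv A B C ∘ assoc A B C = idm _;
  assoc_inv_r : forall A B C, assoc A B C ∘ assoc_inv A B C = idm _;
  assoc_nat : forall A A' B B' C C' (f : hom A A') (g : hom B B') (h : hom C C'),
      assoc A' B' C' ∘ tens_hom _ _ _ _ (tens_hom _ _ _ _ f g) h
      = tens_hom _ _ _ _ f (tens_hom _ _ _ _ g h) ∘ assoc A B C;
  lunit : forall A, hom (tens unit A) A;
  lunit_inv : forall A, hom A (tens unit A);
  lunit_inv_l : forall A, lunit_inv A ∘ lunit A = idm _;
  lunit_inv_r : forall A, lunit A ∘ lunit_inv A = idm _;
  lunit_nat : forall A A' (f : hom A A'),
      lunit A' ∘ tens_hom _ _ _ _ (idm unit) f = f ∘ lunit A;
  runit : forall A, hom (tens A unit) A;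
  runit_inv : forall A, hom A (tens A unit);
  runit_inv_l : forall A, runit_inv A ∘ runit A = idm _;
  runit_inv_r : forall A, runit A ∘ runit_inv A = idm _;
  runit_nat : forall A A' (f : hom A A'),
      runit A' ∘ tens_hom _ _ _ _ f (idm unit) = f ∘ runit A;
  pentagon : forall A B C D,
      tens_hom _ _ _ _ (idm A) (assoc B C D) ∘ assoc A (tens B C) D
        ∘ tens_hom _ _ _ _ (assoc A B C) (idm D)
      = assoc A B (tens C D) ∘ assoc (tens A B) C D;
  triangle : forall A B,
      tens_hom _ _ _ _ (idm A) (lunit B) ∘ assoc A unit B
      = tens_hom _ _ _ _ (runit A) (idm B);
  sym : forall A B, hom (tens A B) (tens B A);
  sym_nat : forall A A' B B' (f : hom A A') (g : hom B B'),
      sym A' B' ∘ tens_hom _ _ _ _ f g = tens_hom _ _ _ _ g f ∘ sym A B;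
  sym_inv : forall A B, sym B A ∘ sym A B = idm _;
  hexagon : forall A B C,
      assoc B C A ∘ sym A (tens B C) ∘ assoc A B C
      = tens_hom _ _ _ _ (idm B) (sym A C) ∘ assoc B A C
          ∘ tens_hom _ _ _ _ (sym A B) (idm C);
  ihom : V -> V -> V;
  ev : forall B C, hom (tens (ihom B C) B) C;
  curry : forall A B C, hom (tens A B) C -> hom A (ihom B C);
  ev_curry : forall A B C (f : hom (tens A B) C),
      ev B C ∘ tens_hom _ _ _ _ (curry A B C f) (idm B) = f;
  curry_unique : forall A B C (f : hom (tens A B) C) (g : hom A (ihom B C)),
      ev B C ∘ tens_hom _ _ _ _ g (idm B) = f -> g = curry A B C f
}.
Arguments tens {V} _ _ _.
Arguments tens_hom {V} _ {A A' B B'} _ _.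
Arguments unit {V} _.
Arguments assoc {V} _ _ _ _.
Arguments assoc_inv {V} _ _ _ _.
Arguments lunit {V} _ _.
Arguments lunit_inv {V} _ _.
Arguments runit {V} _ _.
Arguments runit_inv {V} _ _.
Arguments sym {V} _ _ _.
Arguments ihom {V} _ _ _.
Arguments ev {V} _ _ _.
Arguments curry {V} _ {A B C} _.

Record VCat {V : Cat} (W : SMC V) := {
  vob : Type;
  vhom : vob -> vob -> V;
  vcomp : forall A B C, hom (tens W (vhom B C) (vhom A B)) (vhom A C);
  vid : forall A, hom (unit W) (vhom A A);
  vassoc : forall A B C D,
      vcomp A B D ∘ tens_hom W (vcomp B C D) (idm (vhom A B))
      = vcomp A C D ∘ tens_hom W (idm (vhom C D)) (vcomp A B C)
          ∘ assoc W (vhom C D) (vhom B C) (vhom A B);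
  vunit_l : forall A B,
      vcomp A B B ∘ tens_hom W (vid B) (idm (vhom A B)) = lunit W (vhom A B);
  vunit_r : forall A B,
      vcomp A A B ∘ tens_hom W (idm (vhom A B)) (vid A) = runit W (vhom A B)
}.
Arguments vob {V W} _.
Arguments vhom {V W} _ _ _.
Arguments vcomp {V W} _ _ _ _.
Arguments vid {V W} _ _.

Section Enriched.
Context {V : Cat} {W : SMC V} (B : VCat W).

(* morphisms of the underlying ordinary category B_0 *)
Definition U0 (A C : vob B) : Type := hom (unit W) (vhom B A C).

Definition comp0 {A1 A2 A3 : vob B} (g : U0 A2 A3) (f : U0 A1 A2) : U0 A1 A3 :=
  vcomp B A1 A2 A3 ∘ tens_hom W g f ∘ lunit_inv W (unit W).

Definition homL (A : vob B) {B1 B2 : vob B} (m : U0 B1 B2)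
  : hom (vhom B A B1) (vhom B A B2) :=
  vcomp B A B1 B2 ∘ tens_hom W m (idm (vhom B A B1)) ∘ lunit_inv W (vhom B A B1).

Definition homR {A1 A2 : vob B} (e : U0 A1 A2) (C : vob B)
  : hom (vhom B A2 C) (vhom B A1 C) :=
  vcomp B A1 A2 C ∘ tens_hom W (idm (vhom B A2 C)) e ∘ runit_inv W (vhom B A2 C).

Definition MorClass : Type := forall A C : vob B, U0 A C -> Prop.

Definition class_eq (C D : MorClass) : Prop :=
  forall X Y (f : U0 X Y), C X Y f <-> D X Y f.

Definition orthV {A1 A2 B1 B2 : vob B} (e : U0 A1 A2) (m : U0 B1 B2) : Prop :=
  is_pullback (homR e B1) (homL A2 m) (homL A1 m) (homR e B2).

Definition downV (S : MorClass) : MorClass :=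
  fun B1 B2 m => forall A1 A2 (e : U0 A1 A2), S A1 A2 e -> orthV e m.

Definition upV (N : MorClass) : MorClass :=
  fun A1 A2 e => forall B1 B2 (m : U0 B1 B2), N B1 B2 m -> orthV e m.

Definition V_prefactorization_system (E M : MorClass) : Prop :=
  class_eq (downV E) M /\ class_eq (upV M) E.

Definition V_factorization_system (E M : MorClass) : Prop :=
  V_prefactorization_system E M /\
  forall X Y (f : U0 X Y), exists Z (e : U0 X Z) (m : U0 Z Y),
    E X Z e /\ M Z Y m /\ f = comp0 m e.

Definition MonoV {B1 B2 : vob B} (m : U0 B1 B2) : Prop :=
  forall A, is_mono (homL A m).

Definition is_V_intersection {I : Type} {C : vob B} {A : I -> vob B}
  (m : forall i, U0 (A i) C) (P : vob B) (q : U0 P C) (p : forall i, U0 P (A i))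
  : Prop :=
  (forall i, comp0 (m i) (p i) = q) /\
  forall D, is_wide_pullback (homL D q) (fun i => homL D (p i)) (fun i => homL D (m i)).

Definition has_V_intersections (M : MorClass) : Prop :=
  forall (I : Type) (C : vob B) (A : I -> vob B) (m : forall i, U0 (A i) C),
    (forall i, M (A i) C (m i)) ->
    exists P (q : U0 P C) (p : forall i, U0 P (A i)), is_V_intersection m P q p.

Definition has_V_pullbacks_of (M : MorClass) : Prop :=
  forall X Y Z (m : U0 X Z) (f : U0 Y Z), M X Z m ->
    exists P (p1 : U0 P X) (p2 : U0 P Y),
      comp0 m p1 = comp0 f p2 /\
      forall D, is_pullback (homL D p1) (homL D p2) (homL D m) (homL D f).

(* cotensors: for X in V and C in B, an object {X,C} with counit
   k : X -> B({X,C}, C) such that the induced B(A,{X,C}) -> [X, B(A,C)] is iso *)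
Definition is_cotensor (X : V) (C P : vob B) (k : hom X (vhom B P C)) : Prop :=
  forall A : vob B,
    is_iso (curry W (vcomp B A P C ∘ sym W (vhom B A P) (vhom B P C)
                       ∘ tens_hom W (idm (vhom B A P)) k)).

Definition cotensored : Prop :=
  forall (X : V) (C : vob B), exists P (k : hom X (vhom B P C)), is_cotensor X C P k.

End Enriched.

(* Factor f : X -> Y as f = m ∘ e, where m is the V-intersection of all M-morphisms
   through which f factors; m lies in M because M = E^↓ is closed under V-intersections.
   To show that e lies in E = M^↑, cotensors reduce V-orthogonality against m' in M to
   ordinary lifting against the induced maps {Q, m'}, which are again in M.  For a square
   g ∘ x = y ∘ e with g in M, pull g back along y: composing the pulled-back M-morphism
   with m gives another M-morphism through which f factors, so minimality of m splits it,
   and the splitting yields the diagonal.  The second claim is the first one for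
   N = (Σ ∪ E)^↓, which inherits every hypothesis from M. *)

From Stdlib Require Import IndefiniteDescription.

Ltac lassoc := repeat rewrite cmp_assoc.
Ltac rassoc := repeat rewrite <- cmp_assoc.

Lemma postcomp_eq2 {V : Cat} {A B C D : V} (a : hom B C) (b : hom A B) (c : hom A C) :
  a ∘ b = c -> forall x : hom C D, x ∘ a ∘ b = x ∘ c.
Proof. intros H x. rewrite <- cmp_assoc, H. reflexivity. Qed.

Lemma postcomp_eq3 {V : Cat} {A B C D E : V}
  (a : hom C D) (b : hom B C) (c : hom A B) (d : hom A D) :
  a ∘ b ∘ c = d -> forall x : hom D E, x ∘ a ∘ b ∘ c = x ∘ d.
Proof. intros H x. rewrite <- H, !cmp_assoc. reflexivity. Qed.

(* Rewrites with [E] also inside a left-nested composite [x ∘ a ∘ b (∘ c)]. *)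
Ltac rewrite_cmp_ E :=
  first [rewrite E | rewrite (postcomp_eq2 _ _ _ E) | rewrite (postcomp_eq3 _ _ _ _ E)]; lassoc.
Tactic Notation "rewrite_cmp" open_constr(E) := rewrite_cmp_ E.

Section Category.
Context {V : Cat}.

Lemma split_epi_cancel {A B C : V} (x y : hom B C) (l : hom A B) (li : hom B A) :
  l ∘ li = idm B -> x ∘ l = y ∘ l -> x = y.
Proof.
  intros H E. rewrite <- (cmp_id_r _ _ _ x), <- (cmp_id_r _ _ _ y), <- H, !cmp_assoc, E.
  reflexivity.
Qed.

Lemma split_mono_cancel {A B C : V} (x y : hom C A) (l : hom A B) (li : hom B A) :
  li ∘ l = idm A -> l ∘ x = l ∘ y -> x = y.
Proof.
  intros H E. rewrite <- (cmp_id_l _ _ _ x), <- (cmp_id_l _ _ _ y), <- H, <- !cmp_assoc, E.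
  reflexivity.
Qed.

Lemma inverse_unique {A B : V} (l : hom A B) (li x : hom B A) :
  li ∘ l = idm A -> l ∘ x = idm B -> x = li.
Proof.
  intros H1 H2. rewrite <- (cmp_id_l _ _ _ x), <- H1, <- cmp_assoc, H2, cmp_id_r.
  reflexivity.
Qed.

Lemma inverse_natural {A B A' B' : V} (l : hom A B) (li : hom B A) (l' : hom A' B')
  (li' : hom B' A') (F : hom A A') (f : hom B B') :
  l ∘ li = idm _ -> li' ∘ l' = idm _ -> l' ∘ F = f ∘ l -> F ∘ li = li' ∘ f.
Proof.
  intros H1 H2 H3.
  rewrite <- (cmp_id_l _ _ _ (F ∘ li)), <- H2, <- !cmp_assoc, (cmp_assoc _ _ _ _ _ l' F li), H3.
  rewrite <- cmp_assoc, H1, cmp_id_r. reflexivity.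
Qed.

Lemma is_pullback_paste {P X Y Z Y' Z' : V} (p1 : hom P X) (p2 : hom P Y) (f : hom X Z)
  (g : hom Y Z) (q2 : hom Y Y') (f' : hom Z Z') (g' : hom Y' Z') :
  is_pullback p1 p2 f g -> is_pullback g q2 f' g' -> is_pullback p1 (q2 ∘ p2) (f' ∘ f) g'.
Proof.
  intros [c1 H1] [c2 H2]. split.
  { rassoc. rewrite c1. lassoc. rewrite c2. reflexivity. }
  intros Q r1 r2 Hr.
  destruct (H2 Q (f ∘ r1) r2) as [v [Hv1 [Hv2 Hvu]]]. { lassoc. exact Hr. }
  destruct (H1 Q r1 v) as [u [Hu1 [Hu2 Huu]]]. { symmetry. exact Hv1. }
  exists u. split; [exact Hu1|split].
  { rassoc. rewrite Hu2. exact Hv2. }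
  intros u' E1 E2. apply Huu; [exact E1|]. apply Hvu.
  - lassoc. rewrite <- c1. rassoc. rewrite E1. reflexivity.
  - rewrite cmp_assoc. exact E2.
Qed.

End Category.

Section Monoidal.
Context {V : Cat} (W : SMC V).
Local Notation "f ⊗ g" := (tens_hom W f g) (at level 35).

Lemma tens_hom_comp {A A' A'' B B' B'' : V} (f : hom A A') (f' : hom A' A'')
  (g : hom B B') (g' : hom B' B'') :
  (f' ⊗ g') ∘ (f ⊗ g) = (f' ∘ f) ⊗ (g' ∘ g).
Proof. symmetry. apply tens_comp. Qed.

Lemma tens_hom_comp_l {A A' A'' B : V} (f : hom A A') (f' : hom A' A'') :
  (f' ∘ f) ⊗ idm B = (f' ⊗ idm B) ∘ (f ⊗ idm B).
Proof. rewrite tens_hom_comp, cmp_id_l. reflexivity. Qed.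

Lemma tens_hom_comp_r {A B B' B'' : V} (g : hom B B') (g' : hom B' B'') :
  idm A ⊗ (g' ∘ g) = (idm A ⊗ g') ∘ (idm A ⊗ g).
Proof. rewrite tens_hom_comp, cmp_id_l. reflexivity. Qed.

Lemma tens_hom_interchange {A A' B B' : V} (f : hom A A') (g : hom B B') :
  (idm A' ⊗ g) ∘ (f ⊗ idm B) = (f ⊗ idm B') ∘ (idm A ⊗ g).
Proof. rewrite !tens_hom_comp, !cmp_id_l, !cmp_id_r. reflexivity. Qed.

Lemma tens_hom_split {A A' B B' : V} (f : hom A A') (g : hom B B') :
  f ⊗ g = (idm A' ⊗ g) ∘ (f ⊗ idm B).
Proof. rewrite tens_hom_comp, cmp_id_l, cmp_id_r. reflexivity. Qed.

Lemma lunit_inv_nat {A A' : V} (f : hom A A') :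
  lunit_inv W A' ∘ f = (idm (unit W) ⊗ f) ∘ lunit_inv W A.
Proof. symmetry. eapply inverse_natural; [apply lunit_inv_r | apply lunit_inv_l | apply lunit_nat]. Qed.

Lemma runit_inv_nat {A A' : V} (f : hom A A') :
  runit_inv W A' ∘ f = (f ⊗ idm (unit W)) ∘ runit_inv W A.
Proof. symmetry. eapply inverse_natural; [apply runit_inv_r | apply runit_inv_l | apply runit_nat]. Qed.

Lemma assoc_inv_nat {A A' B B' C C' : V} (f : hom A A') (g : hom B B') (h : hom C C') :
  assoc_inv W A' B' C' ∘ (f ⊗ (g ⊗ h)) = ((f ⊗ g) ⊗ h) ∘ assoc_inv W A B C.
Proof. symmetry. eapply inverse_natural; [apply assoc_inv_r | apply assoc_inv_l | apply assoc_nat]. Qed.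

Lemma tens_unit_r_inj {A B : V} (f g : hom A B) :
  f ⊗ idm (unit W) = g ⊗ idm (unit W) -> f = g.
Proof.
  intro H. apply (split_epi_cancel f g (runit W A) (runit_inv W A)); [apply runit_inv_r|].
  rewrite <- !runit_nat, H. reflexivity.
Qed.

Lemma tens_unit_l_inj {A B : V} (f g : hom A B) :
  idm (unit W) ⊗ f = idm (unit W) ⊗ g -> f = g.
Proof.
  intro H. apply (split_epi_cancel f g (lunit W A) (lunit_inv W A)); [apply lunit_inv_r|].
  rewrite <- !lunit_nat, H. reflexivity.
Qed.

(* Kelly's coherence consequences of the pentagon and triangle axioms. *)
Lemma runit_tens (X Y : V) :
  (idm X ⊗ runit W Y) ∘ assoc W X Y (unit W) = runit W (tens W X Y).
Proof.
  symmetry. apply tens_unit_r_inj.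
  apply (split_mono_cancel _ _ (assoc W X Y (unit W)) (assoc_inv W X Y (unit W)));
    [apply assoc_inv_l|].
  rewrite <- (triangle _ W (tens W X Y) (unit W)).
  rewrite cmp_assoc, <- (tens_id _ W X Y), assoc_nat, <- cmp_assoc, <- pentagon.
  lassoc. rewrite tens_hom_comp, cmp_id_l, triangle, tens_hom_comp_l, cmp_assoc, assoc_nat.
  reflexivity.
Qed.

Lemma lunit_tens (X Y : V) :
  lunit W (tens W X Y) ∘ assoc W (unit W) X Y = lunit W X ⊗ idm Y.
Proof.
  apply tens_unit_l_inj.
  apply (split_epi_cancel _ _
     (assoc W (unit W) (tens W (unit W) X) Y ∘ (assoc W (unit W) (unit W) X ⊗ idm Y))
     ((assoc_inv W (unit W) (unit W) X ⊗ idm Y) ∘ assoc_inv W (unit W) (tens W (unit W) X) Y)).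
  { rewrite cmp_assoc, <- (cmp_assoc _ _ _ _ _ (assoc W _ _ _)).
    rewrite tens_hom_comp, assoc_inv_r, cmp_id_l, tens_id, cmp_id_r, assoc_inv_r. reflexivity. }
  rewrite tens_hom_comp_r. lassoc. rewrite (postcomp_eq3 _ _ _ _ (pentagon _ W (unit W) (unit W) X Y)).
  lassoc. rewrite triangle, <- (tens_id _ W X Y), <- assoc_nat, <- triangle, tens_hom_comp_l.
  lassoc. rewrite assoc_nat. reflexivity.
Qed.

Lemma runit_unit_lunit : runit W (unit W) = lunit W (unit W).
Proof.
  apply tens_unit_r_inj. rewrite <- triangle.
  assert (E : idm (unit W) ⊗ lunit W (unit W) = lunit W (tens W (unit W) (unit W))).
  { apply (split_mono_cancel _ _ (lunit W (unit W)) (lunit_inv W _)); [apply lunit_inv_l|].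
    rewrite lunit_nat. reflexivity. }
  rewrite E, lunit_tens. reflexivity.
Qed.

Lemma lunit_inv_unit_runit_inv : lunit_inv W (unit W) = runit_inv W (unit W).
Proof.
  apply (inverse_unique (runit W (unit W))); [apply runit_inv_l|].
  rewrite runit_unit_lunit. apply lunit_inv_r.
Qed.

Lemma assoc_lunit_inv (X Y : V) :
  assoc W (unit W) X Y ∘ (lunit_inv W X ⊗ idm Y) = lunit_inv W (tens W X Y).
Proof.
  apply (inverse_unique (lunit W (tens W X Y))); [apply lunit_inv_l|].
  rewrite cmp_assoc, lunit_tens, tens_hom_comp, lunit_inv_r, cmp_id_l, tens_id. reflexivity.
Qed.

Lemma assoc_inv_runit_inv (X Y : V) :
  assoc_inv W X Y (unit W) ∘ (idm X ⊗ runit_inv W Y) = runit_inv W (tens W X Y).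
Proof.
  apply (inverse_unique (runit W (tens W X Y))); [apply runit_inv_l|].
  rewrite <- runit_tens, cmp_assoc, <- (cmp_assoc _ _ _ _ _ (_ ⊗ _) (assoc W _ _ _)).
  rewrite assoc_inv_r, cmp_id_r, tens_hom_comp, runit_inv_r, cmp_id_l, tens_id. reflexivity.
Qed.

Lemma assoc_runit_inv (X Y : V) :
  assoc W X (unit W) Y ∘ (runit_inv W X ⊗ idm Y) = idm X ⊗ lunit_inv W Y.
Proof.
  apply (inverse_unique (idm X ⊗ lunit W Y)).
  { rewrite tens_hom_comp, lunit_inv_l, cmp_id_l, tens_id. reflexivity. }
  rewrite cmp_assoc, triangle, tens_hom_comp, runit_inv_r, cmp_id_l, tens_id. reflexivity.
Qed.

Lemma curry_ev {A B C : V} (y : hom A (ihom W B C)) : curry W (ev W B C ∘ (y ⊗ idm B)) = y.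
Proof. symmetry. apply curry_unique. reflexivity. Qed.

Lemma curry_inj {A B C : V} (x y : hom A (ihom W B C)) :
  ev W B C ∘ (x ⊗ idm B) = ev W B C ∘ (y ⊗ idm B) -> x = y.
Proof. intro H. rewrite <- (curry_ev x), <- (curry_ev y), H. reflexivity. Qed.

End Monoidal.

Section Underlying.
Context {V : Cat} {W : SMC V} (B : VCat W).
Local Notation "f ⊗ g" := (tens_hom W f g) (at level 35).
Local Notation vc := (vcomp B).
Local Notation vh := (vhom B).

Lemma vassoc_inv A B' C D :
  vc A C D ∘ (idm (vh C D) ⊗ vc A B' C)
  = vc A B' D ∘ (vc B' C D ⊗ idm (vh A B')) ∘ assoc_inv W (vh C D) (vh B' C) (vh A B').
Proof. rewrite vassoc, <- cmp_assoc, assoc_inv_r, cmp_id_r. reflexivity. Qed.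

Lemma vcomp_homL A B' C D (h : U0 B C D) :
  vc A B' D ∘ (homL B B' h ⊗ idm (vh A B')) = homL B A h ∘ vc A B' C.
Proof.
  unfold homL. rewrite !tens_hom_comp_l. lassoc. rewrite vassoc. lassoc.
  rewrite_cmp (assoc_nat _ W _ _ _ _ _ _ h (idm (vh B' C)) (idm (vh A B'))).
  rewrite_cmp (assoc_lunit_inv W (vh B' C) (vh A B')). rewrite tens_id.
  rewrite_cmp (tens_hom_interchange W h (vc A B' C)).
  rewrite_cmp (eq_sym (lunit_inv_nat W (vc A B' C))). reflexivity.
Qed.

Lemma vcomp_homR A1 A2 B' C (e : U0 B A1 A2) :
  vc A1 B' C ∘ (idm (vh B' C) ⊗ homR B e B') = homR B e C ∘ vc A2 B' C.
Proof.
  unfold homR. rewrite !tens_hom_comp_r. lassoc. rewrite vassoc_inv. lassoc.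
  rewrite_cmp (assoc_inv_nat W (idm (vh B' C)) (idm (vh A2 B')) e).
  rewrite_cmp (assoc_inv_runit_inv W (vh B' C) (vh A2 B')). rewrite tens_id.
  rewrite_cmp (eq_sym (tens_hom_interchange W (vc A2 B' C) e)).
  rewrite_cmp (eq_sym (runit_inv_nat W (vc A2 B' C))). reflexivity.
Qed.

Lemma vcomp_homR_homL A B1 B2 D (g : U0 B B1 B2) :
  vc A B1 D ∘ (homR B g D ⊗ idm (vh A B1)) = vc A B2 D ∘ (idm (vh B2 D) ⊗ homL B A g).
Proof.
  unfold homR, homL. rewrite !tens_hom_comp_l, !tens_hom_comp_r. lassoc. rewrite vassoc. lassoc.
  rewrite_cmp (assoc_nat _ W _ _ _ _ _ _ (idm (vh B2 D)) g (idm (vh A B1))).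
  rewrite_cmp (assoc_runit_inv W (vh B2 D) (vh A B1)). reflexivity.
Qed.

Lemma homL_point A C D (h : U0 B C D) (x : U0 B A C) : homL B A h ∘ x = comp0 B h x.
Proof.
  unfold homL, comp0. rewrite_cmp (lunit_inv_nat W x). rewrite_cmp (tens_hom_comp W _ _ _ _).
  rewrite cmp_id_l, cmp_id_r. reflexivity.
Qed.

Lemma homR_point A1 A2 C (e : U0 B A1 A2) (y : U0 B A2 C) : homR B e C ∘ y = comp0 B y e.
Proof.
  unfold homR, comp0. rewrite_cmp (runit_inv_nat W y). rewrite_cmp (tens_hom_comp W _ _ _ _).
  rewrite cmp_id_l, cmp_id_r, lunit_inv_unit_runit_inv. reflexivity.
Qed.

Lemma homL_comp A X Y Z (h : U0 B Y Z) (g : U0 B X Y) :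
  homL B A (comp0 B h g) = homL B A h ∘ homL B A g.
Proof.
  unfold homL at 3. lassoc. rewrite <- vcomp_homL.
  rewrite_cmp (eq_sym (tens_hom_comp_l W _ _)). rewrite homL_point. reflexivity.
Qed.

Lemma homR_comp X Y Z C (g : U0 B Y Z) (f : U0 B X Y) :
  homR B (comp0 B g f) C = homR B f C ∘ homR B g C.
Proof.
  unfold homR at 3. lassoc. rewrite <- vcomp_homR.
  rewrite_cmp (eq_sym (tens_hom_comp_r W _ _)). rewrite homR_point. reflexivity.
Qed.

Lemma comp0_assoc X Y Z T (h : U0 B Z T) (g : U0 B Y Z) (f : U0 B X Y) :
  comp0 B (comp0 B h g) f = comp0 B h (comp0 B g f).
Proof.
  rewrite <- (homL_point _ _ _ (comp0 B h g) f), <- (homL_point _ _ _ h (comp0 B g f)),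
    homL_comp, <- (homL_point _ _ _ g f), cmp_assoc.
  reflexivity.
Qed.

Lemma comp0_id_r X Y (m : U0 B X Y) : comp0 B m (vid B X) = m.
Proof.
  rewrite <- homR_point. unfold homR. rewrite vunit_r, runit_inv_r, cmp_id_l. reflexivity.
Qed.

Lemma homR_homL A1 A2 C1 C2 (e : U0 B A1 A2) (m : U0 B C1 C2) :
  homR B e C2 ∘ homL B A2 m = homL B A1 m ∘ homR B e C1.
Proof.
  unfold homL at 1. lassoc. rewrite <- vcomp_homR.
  rewrite_cmp (tens_hom_interchange W m (homR B e C1)).
  rewrite_cmp (eq_sym (lunit_inv_nat W (homR B e C1))). reflexivity.
Qed.

Lemma MonoV_cancel {X Y} (m : U0 B X Y) :
  MonoV B m -> forall D (x y : U0 B D X), comp0 B m x = comp0 B m y -> x = y.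
Proof. intros Hm D x y. rewrite <- !homL_point. apply Hm. Qed.

End Underlying.

Section Orthogonality.
Context {V : Cat} {W : SMC V} (B : VCat W).

Lemma orthV_comp {A1 A2 B1 B2 B3} (e : U0 B A1 A2) (m1 : U0 B B1 B2) (m2 : U0 B B2 B3) :
  orthV B e m1 -> orthV B e m2 -> orthV B e (comp0 B m2 m1).
Proof. unfold orthV. intros H1 H2. rewrite !homL_comp. eapply is_pullback_paste; eassumption. Qed.

Lemma orthV_pullback {A1 A2 X Y Z R} (e : U0 B A1 A2) (m : U0 B X Z) (h : U0 B Y Z)
  (p1 : U0 B R X) (p2 : U0 B R Y) :
  (forall D, is_pullback (homL B D p1) (homL B D p2) (homL B D m) (homL B D h)) ->
  orthV B e m -> orthV B e p2.
Proof.
  intros Hpb [_ Hm]. split; [symmetry; apply homR_homL|].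
  intros Q q1 q2 Hq.
  destruct (Hm Q (homL B A1 p1 ∘ q1) (homL B A2 h ∘ q2)) as [w [Hw1 [Hw2 Hwu]]].
  { lassoc. rewrite (proj1 (Hpb A1)). rassoc. rewrite Hq. lassoc. rewrite homR_homL. reflexivity. }
  destruct (proj2 (Hpb A2) Q w q2 Hw2) as [u [Hu1 [Hu2 Huu]]].
  (* maps into the pullback at [A1] are determined by their two legs *)
  destruct (proj2 (Hpb A1) Q (homL B A1 p1 ∘ q1) (homL B A1 p2 ∘ q1)) as [u0 [_ [_ Hu0]]].
  { lassoc. rewrite (proj1 (Hpb A1)). reflexivity. }
  exists u. split; [|split; [exact Hu2|]].
  { rewrite (Hu0 (homR B e R ∘ u)), (Hu0 q1); try reflexivity.
    - lassoc. rewrite <- (homR_homL B _ _ _ _ e p1). rassoc. rewrite Hu1. exact Hw1.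
    - lassoc. rewrite <- homR_homL. rassoc. rewrite Hu2. symmetry. exact Hq. }
  intros u' E1 E2. apply Huu; [|exact E2]. apply Hwu.
  - lassoc. rewrite homR_homL. rassoc. rewrite E1. reflexivity.
  - lassoc. rewrite (proj1 (Hpb A2)). rassoc. rewrite E2. reflexivity.
Qed.

Lemma orthV_intersection {I : Type} {A1 A2 C : vob B} {A : I -> vob B} (e : U0 B A1 A2)
  (m : forall i, U0 B (A i) C) (P : vob B) (q : U0 B P C) (p : forall i, U0 B P (A i)) :
  is_V_intersection B m P q p -> (forall i, orthV B e (m i)) -> orthV B e q.
Proof.
  intros [_ Hw] Ho. split; [symmetry; apply homR_homL|].
  intros Q x1 x2 Hx.
  assert (Hex : forall i, exists w : hom Q (vhom B A2 (A i)),
     homR B e (A i) ∘ w = homL B A1 (p i) ∘ x1 /\ homL B A2 (m i) ∘ w = x2 /\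
     (forall w', homR B e (A i) ∘ w' = homL B A1 (p i) ∘ x1 ->
                 homL B A2 (m i) ∘ w' = x2 -> w' = w)).
  { intro i. apply (proj2 (Ho i)). lassoc. rewrite (proj1 (Hw A1) i). exact Hx. }
  set (w := fun i => proj1_sig (constructive_indefinite_description _ (Hex i))).
  assert (Hws : forall i, homR B e (A i) ∘ w i = homL B A1 (p i) ∘ x1 /\
     homL B A2 (m i) ∘ w i = x2 /\
     (forall w', homR B e (A i) ∘ w' = homL B A1 (p i) ∘ x1 ->
                 homL B A2 (m i) ∘ w' = x2 -> w' = w i)).
  { intro i. exact (proj2_sig (constructive_indefinite_description _ (Hex i))). }
  destruct (proj2 (Hw A2) Q x2 w) as [u [Hu1 [Hu2 Huu]]]; [intro i; apply (Hws i)|].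
  destruct (proj2 (Hw A1) Q (homL B A1 q ∘ x1) (fun i => homL B A1 (p i) ∘ x1))
    as [u0 [_ [_ Hu0]]].
  { intro i. lassoc. rewrite (proj1 (Hw A1) i). reflexivity. }
  exists u. split; [|split; [exact Hu1|]].
  { rewrite (Hu0 x1), (Hu0 (homR B e P ∘ u)); try reflexivity.
    - lassoc. rewrite <- homR_homL. rassoc. rewrite Hu1. symmetry. exact Hx.
    - intro i. lassoc. rewrite <- homR_homL. rassoc. rewrite Hu2. apply (Hws i). }
  intros u' E1 E2. apply Huu; [exact E2|].
  intro i. apply (Hws i).
  - lassoc. rewrite homR_homL. rassoc. rewrite E1. reflexivity.
  - lassoc. rewrite (proj1 (Hw A2) i). exact E2.
Qed.

End Orthogonality.

Section Cotensor.
Context {V : Cat} {W : SMC V} (B : VCat W).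
Local Notation "f ⊗ g" := (tens_hom W f g) (at level 35).
Local Notation vh := (vhom B).

(* The uncurried form of the comparison map B(A, P) -> [Q, B(A, C)] in [is_cotensor]. *)
Definition cotensor_pairing (Q : V) (C P : vob B) (k : hom Q (vh P C)) (A : vob B)
  : hom (tens W (vh A P) Q) (vh A C) :=
  vcomp B A P C ∘ sym W (vh A P) (vh P C) ∘ (idm (vh A P) ⊗ k).

Section FixedCotensor.
Variables (Q : V) (C P : vob B) (k : hom Q (vh P C)).
Local Notation pairing := (cotensor_pairing Q C P k).

Lemma cotensor_pairing_curry A {Z : V} (x : hom Z (vh A P)) :
  pairing A ∘ (x ⊗ idm Q) = ev W Q (vh A C) ∘ ((curry W (pairing A) ∘ x) ⊗ idm Q).
Proof. rewrite tens_hom_comp_l, cmp_assoc, ev_curry. reflexivity. Qed.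

Hypothesis Hc : is_cotensor B Q C P k.

Lemma cotensor_pairing_inj A {Z : V} (x y : hom Z (vh A P)) :
  pairing A ∘ (x ⊗ idm Q) = pairing A ∘ (y ⊗ idm Q) -> x = y.
Proof.
  rewrite !cotensor_pairing_curry. intro H. apply curry_inj in H.
  destruct (Hc A) as [psi [H1 _]]. exact (split_mono_cancel _ _ _ psi H1 H).
Qed.

Lemma cotensor_pairing_surj A {Z : V} (w : hom (tens W Z Q) (vh A C)) :
  exists u : hom Z (vh A P), pairing A ∘ (u ⊗ idm Q) = w.
Proof.
  destruct (Hc A) as [psi [_ H2]]. exists (psi ∘ curry W w).
  rewrite cotensor_pairing_curry. unfold cotensor_pairing in *.
  rewrite cmp_assoc, H2, cmp_id_l, ev_curry. reflexivity.
Qed.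

Lemma cotensor_pairing_point A (g : U0 B A P) :
  pairing A ∘ (g ⊗ idm Q) = homR B g C ∘ k ∘ runit W Q ∘ sym W (unit W) Q.
Proof.
  unfold cotensor_pairing, homR. rewrite_cmp (tens_hom_comp W _ _ _ _). rewrite cmp_id_l, cmp_id_r.
  rewrite_cmp (sym_nat _ W _ _ _ _ g k). rewrite_cmp (runit_inv_nat W k).
  rewrite_cmp (runit_inv_l _ W Q). rewrite cmp_id_r.
  rewrite_cmp (tens_hom_comp W _ _ _ _). rewrite cmp_id_l, cmp_id_r. reflexivity.
Qed.

Lemma unit_sym_runit_iso :
  (runit W Q ∘ sym W (unit W) Q) ∘ (sym W Q (unit W) ∘ runit_inv W Q) = idm Q.
Proof. lassoc. rewrite_cmp (sym_inv _ W Q (unit W)). rewrite cmp_id_r. apply runit_inv_r. Qed.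

Lemma cotensor_point_inj A (g g' : U0 B A P) : homR B g C ∘ k = homR B g' C ∘ k -> g = g'.
Proof.
  intro H. apply (cotensor_pairing_inj A). rewrite !cotensor_pairing_point, H. reflexivity.
Qed.

Lemma cotensor_point_surj A (h : hom Q (vh A C)) : exists g : U0 B A P, homR B g C ∘ k = h.
Proof.
  destruct (cotensor_pairing_surj A (h ∘ (runit W Q ∘ sym W (unit W) Q))) as [g Hg].
  exists g. rewrite cotensor_pairing_point in Hg.
  apply (split_epi_cancel _ _ _ _ unit_sym_runit_iso). lassoc. rewrite Hg. lassoc. reflexivity.
Qed.

End FixedCotensor.

Lemma cotensor_pairing_homR Q C P k A1 A2 (e : U0 B A1 A2) :
  cotensor_pairing Q C P k A1 ∘ (homR B e P ⊗ idm Q) = homR B e C ∘ cotensor_pairing Q C P k A2.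
Proof.
  unfold cotensor_pairing. rewrite_cmp (tens_hom_comp W _ _ _ _). rewrite cmp_id_l, cmp_id_r.
  rewrite_cmp (sym_nat _ W _ _ _ _ (homR B e P) k). rewrite (tens_hom_split W k (homR B e P)).
  lassoc. rewrite vcomp_homR. rewrite_cmp (sym_nat _ W _ _ _ _ (idm (vh A2 P)) k). reflexivity.
Qed.

(* [g] is the map of cotensors [{Q, C1} -> {Q, C2}] induced by [m]. *)
Lemma cotensor_pairing_homL Q C1 C2 P1 P2 k1 k2 (m : U0 B C1 C2) (g : U0 B P1 P2)
  (Hg : homR B g C2 ∘ k2 = homL B P1 m ∘ k1) A :
  cotensor_pairing Q C2 P2 k2 A ∘ (homL B A g ⊗ idm Q)
  = homL B A m ∘ cotensor_pairing Q C1 P1 k1 A.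
Proof.
  unfold cotensor_pairing. rewrite_cmp (tens_hom_comp W _ _ _ _). rewrite cmp_id_l, cmp_id_r.
  rewrite_cmp (sym_nat _ W _ _ _ _ (homL B A g) k2). rewrite (tens_hom_split W k2 (homL B A g)).
  lassoc. rewrite <- vcomp_homR_homL. rewrite_cmp (eq_sym (tens_hom_comp_l W _ _)).
  rewrite Hg, tens_hom_comp_l. lassoc. rewrite vcomp_homL.
  rewrite_cmp (sym_nat _ W _ _ _ _ (idm (vh A P1)) k1). reflexivity.
Qed.

Lemma orthV_cotensor Q C1 C2 P1 P2 k1 k2 (Hc1 : is_cotensor B Q C1 P1 k1)
  (Hc2 : is_cotensor B Q C2 P2 k2) (m : U0 B C1 C2) (g : U0 B P1 P2)
  (Hg : homR B g C2 ∘ k2 = homL B P1 m ∘ k1) A1 A2 (e : U0 B A1 A2) :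
  orthV B e m -> orthV B e g.
Proof.
  pose proof (cotensor_pairing_homL Q C1 C2 P1 P2 k1 k2 m g Hg) as Nat.
  intros [_ Hm]. split; [symmetry; apply homR_homL|].
  intros Z x1 x2 Hx.
  destruct (Hm (tens W Z Q) (cotensor_pairing Q C1 P1 k1 A1 ∘ (x1 ⊗ idm Q))
                            (cotensor_pairing Q C2 P2 k2 A2 ∘ (x2 ⊗ idm Q)))
    as [w [Hw1 [Hw2 Hwu]]].
  { lassoc. rewrite <- Nat. rassoc. rewrite <- tens_hom_comp_l, Hx, tens_hom_comp_l. lassoc.
    rewrite cotensor_pairing_homR. reflexivity. }
  destruct (cotensor_pairing_surj Q C1 P1 k1 Hc1 A2 w) as [u Hu].
  exists u. split; [|split].
  - apply (cotensor_pairing_inj Q C1 P1 k1 Hc1). rewrite tens_hom_comp_l. lassoc.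
    rewrite cotensor_pairing_homR. rassoc. rewrite Hu. exact Hw1.
  - apply (cotensor_pairing_inj Q C2 P2 k2 Hc2). rewrite tens_hom_comp_l. lassoc.
    rewrite Nat. rassoc. rewrite Hu. exact Hw2.
  - intros u' E1 E2. apply (cotensor_pairing_inj Q C1 P1 k1 Hc1). rewrite Hu. apply Hwu.
    + lassoc. rewrite <- cotensor_pairing_homR. rassoc. rewrite <- tens_hom_comp_l, E1. reflexivity.
    + lassoc. rewrite <- Nat. rassoc. rewrite <- tens_hom_comp_l, E2. reflexivity.
Qed.

End Cotensor.

Section Factorization.
Context {V : Cat} {W : SMC V} (B : VCat W).
Local Notation "g ∘0 f" := (comp0 B g f) (at level 40, left associativity).

Definition lifting0 {A1 A2 C1 C2 : vob B} (e : U0 B A1 A2) (g : U0 B C1 C2) : Prop :=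
  forall (x : U0 B A1 C1) (y : U0 B A2 C2), g ∘0 x = y ∘0 e ->
    exists d : U0 B A2 C1, d ∘0 e = x /\ g ∘0 d = y.

Definition is_weak_pullback0 {R X Y Z : vob B} (p1 : U0 B R X) (p2 : U0 B R Y)
  (m : U0 B X Z) (h : U0 B Y Z) : Prop :=
  m ∘0 p1 = h ∘0 p2 /\
  forall D (x : U0 B D X) (y : U0 B D Y), m ∘0 x = h ∘0 y ->
    exists t : U0 B D R, p1 ∘0 t = x /\ p2 ∘0 t = y.

Definition is_least_factorization (M : MorClass B) {X P Y : vob B}
  (e : U0 B X P) (m : U0 B P Y) : Prop :=
  M P Y m /\
  forall Z (n : U0 B Z Y) (t : U0 B X Z), M Z Y n -> n ∘0 t = m ∘0 e ->
    exists s : U0 B P Z, n ∘0 s = m.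

Lemma is_weak_pullback0_of_V {R X Y Z : vob B} (p1 : U0 B R X) (p2 : U0 B R Y)
  (m : U0 B X Z) (h : U0 B Y Z) :
  m ∘0 p1 = h ∘0 p2 ->
  (forall D, is_pullback (homL B D p1) (homL B D p2) (homL B D m) (homL B D h)) ->
  is_weak_pullback0 p1 p2 m h.
Proof.
  intros Hsq Hpb. split; [exact Hsq|]. intros D x y Hxy.
  destruct (proj2 (Hpb D) (unit W) x y) as [t [Ht1 [Ht2 _]]].
  { rewrite !homL_point. exact Hxy. }
  exists t. rewrite <- !homL_point. split; assumption.
Qed.

(* [g] ranges over the maps of cotensors [{Q, B1} -> {Q, B2}] induced by [m]. *)
Lemma orthV_of_cotensor_lifting {A1 A2 B1 B2 : vob B} (e : U0 B A1 A2) (m : U0 B B1 B2) :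
  cotensored B -> MonoV B m ->
  (forall Q P1 k1 P2 k2 (g : U0 B P1 P2), is_cotensor B Q B1 P1 k1 -> is_cotensor B Q B2 P2 k2 ->
     homR B g B2 ∘ k2 = homL B P1 m ∘ k1 -> lifting0 e g) ->
  orthV B e m.
Proof.
  intros Hcot Hm Hlift. split; [symmetry; apply homR_homL|].
  intros Q a b Hab.
  destruct (Hcot Q B1) as [P1 [k1 Hc1]]. destruct (Hcot Q B2) as [P2 [k2 Hc2]].
  destruct (cotensor_point_surj B Q B2 P2 k2 Hc2 P1 (homL B P1 m ∘ k1)) as [g Hg].
  destruct (cotensor_point_surj B Q B1 P1 k1 Hc1 A1 a) as [a' Ha].
  destruct (cotensor_point_surj B Q B2 P2 k2 Hc2 A2 b) as [b' Hb].
  destruct (Hlift Q P1 k1 P2 k2 g Hc1 Hc2 Hg a' b') as [d [Hde Hgd]].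
  { apply (cotensor_point_inj B Q B2 P2 k2 Hc2). rewrite !homR_comp. rassoc.
    rewrite Hg, Hb. lassoc. rewrite homR_homL. rassoc. rewrite Ha. exact Hab. }
  assert (Hu : homL B A2 m ∘ (homR B d B1 ∘ k1) = b).
  { lassoc. rewrite <- homR_homL. rassoc. rewrite <- Hg. lassoc.
    rewrite <- homR_comp, Hgd. exact Hb. }
  exists (homR B d B1 ∘ k1). split; [|split; [exact Hu|]].
  - lassoc. rewrite <- homR_comp, Hde. exact Ha.
  - intros u _ E. apply (Hm A2). rewrite E, Hu. reflexivity.
Qed.

Section LeastFactorization.
Variable M : MorClass B.
Hypothesis M_mono : forall X Y (m : U0 B X Y), M X Y m -> MonoV B m.
Hypothesis M_comp : forall X Y Z (m1 : U0 B X Y) (m2 : U0 B Y Z),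
  M X Y m1 -> M Y Z m2 -> M X Z (m2 ∘0 m1).
Hypothesis M_pullback : forall X Y Z (g : U0 B X Z) (h : U0 B Y Z), M X Z g ->
  exists R (p1 : U0 B R X) (p2 : U0 B R Y), M R Y p2 /\ is_weak_pullback0 p1 p2 g h.
Hypothesis M_intersection : forall I C (A : I -> vob B) (m : forall i, U0 B (A i) C) P q p,
  is_V_intersection B m P q p -> (forall i, M (A i) C (m i)) -> M P C q.

Lemma least_factorization_exists : has_V_intersections B M ->
  forall X Y (f : U0 B X Y), exists P (e : U0 B X P) (m : U0 B P Y),
    f = m ∘0 e /\ is_least_factorization M e m.
Proof.
  intros Hint X Y f.
  set (I := {Z : vob B & {n : U0 B Z Y & {t : U0 B X Z | M Z Y n /\ n ∘0 t = f}}}).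
  set (A := fun i : I => projT1 i).
  set (n := fun i : I => projT1 (projT2 i) : U0 B (A i) Y).
  set (t := fun i : I => proj1_sig (projT2 (projT2 i)) : U0 B X (A i)).
  assert (Hn : forall i, M (A i) Y (n i)) by (intro i; exact (proj1 (proj2_sig (projT2 (projT2 i))))).
  assert (Ht : forall i, n i ∘0 t i = f) by (intro i; exact (proj2 (proj2_sig (projT2 (projT2 i))))).
  destruct (Hint I Y A n Hn) as [P [m [p Hi]]].
  pose proof (M_intersection I Y A n P m p Hi Hn) as Hm.
  destruct Hi as [Hcone Hwp].
  destruct (proj2 (Hwp X) (unit W) f t) as [e [He _]].
  { intro i. rewrite homL_point. apply Ht. }
  rewrite homL_point in He.
  exists P, e, m. split; [symmetry; exact He|split; [exact Hm|]].
  intros Z n' t' Hn' Ht'. rewrite He in Ht'.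
  exists (p (existT _ Z (existT _ n' (exist _ t' (conj Hn' Ht'))))).
  exact (Hcone (existT _ Z (existT _ n' (exist _ t' (conj Hn' Ht'))))).
Qed.

Lemma lifting0_of_least_factorization {X P Y C1 C2 : vob B} (e : U0 B X P) (m : U0 B P Y)
  (g : U0 B C1 C2) :
  is_least_factorization M e m -> M C1 C2 g -> lifting0 e g.
Proof.
  intros [Hm Hleast] Hg x y Hxy.
  destruct (M_pullback _ _ _ g y Hg) as [R [p1 [p2 [Hp2 [Hsq Hlift]]]]].
  destruct (Hlift X x e Hxy) as [t [Ht1 Ht2]].
  destruct (Hleast R (m ∘0 p2) t (M_comp _ _ _ p2 m Hp2 Hm)) as [s Hs].
  { rewrite comp0_assoc, Ht2. reflexivity. }
  assert (Hp2s : p2 ∘0 s = vid B P).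
  { apply (MonoV_cancel B m (M_mono _ _ _ Hm)). rewrite comp0_id_r, <- comp0_assoc. exact Hs. }
  assert (Hgd : g ∘0 (p1 ∘0 s) = y).
  { rewrite <- comp0_assoc, Hsq, comp0_assoc, Hp2s, comp0_id_r. reflexivity. }
  exists (p1 ∘0 s). split; [|exact Hgd].
  apply (MonoV_cancel B g (M_mono _ _ _ Hg)).
  rewrite <- comp0_assoc, Hgd. symmetry. exact Hxy.
Qed.

End LeastFactorization.

Section RightClass.
Variables E M : MorClass B.
Hypothesis HdE : class_eq B (downV B E) M.

Lemma right_class_orthV {A1 A2 X Y} (e : U0 B A1 A2) (m : U0 B X Y) :
  E A1 A2 e -> M X Y m -> orthV B e m.
Proof. intros He Hm. exact (proj2 (HdE X Y m) Hm _ _ e He). Qed.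

Lemma right_class_comp X Y Z (m1 : U0 B X Y) (m2 : U0 B Y Z) :
  M X Y m1 -> M Y Z m2 -> M X Z (m2 ∘0 m1).
Proof.
  intros H1 H2. apply HdE. intros A1 A2 e He.
  apply orthV_comp; apply right_class_orthV; assumption.
Qed.

Lemma right_class_pullback :
  has_V_pullbacks_of B M ->
  forall X Y Z (g : U0 B X Z) (h : U0 B Y Z), M X Z g ->
    exists R (p1 : U0 B R X) (p2 : U0 B R Y), M R Y p2 /\ is_weak_pullback0 p1 p2 g h.
Proof.
  intros Hpb X Y Z g h Hg. destruct (Hpb X Y Z g h Hg) as [R [p1 [p2 [Hsq HpbV]]]].
  exists R, p1, p2. split; [|exact (is_weak_pullback0_of_V p1 p2 g h Hsq HpbV)].
  apply HdE. intros A1 A2 e He.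
  exact (orthV_pullback B e g h p1 p2 HpbV (right_class_orthV e g He Hg)).
Qed.

Lemma right_class_intersection I C (A : I -> vob B) (m : forall i, U0 B (A i) C) P q p :
  is_V_intersection B m P q p -> (forall i, M (A i) C (m i)) -> M P C q.
Proof.
  intros Hi Hm. apply HdE. intros A1 A2 e He.
  apply (orthV_intersection B e m P q p Hi). intro i. exact (right_class_orthV e (m i) He (Hm i)).
Qed.

Lemma right_class_cotensor Q C1 C2 P1 P2 k1 k2 (m : U0 B C1 C2) (g : U0 B P1 P2) :
  is_cotensor B Q C1 P1 k1 -> is_cotensor B Q C2 P2 k2 ->
  homR B g C2 ∘ k2 = homL B P1 m ∘ k1 -> M C1 C2 m -> M P1 P2 g.
Proof.
  intros Hc1 Hc2 Hg Hm. apply HdE. intros A1 A2 e He.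
  exact (orthV_cotensor B Q C1 C2 P1 P2 k1 k2 Hc1 Hc2 m g Hg A1 A2 e (right_class_orthV e m He Hm)).
Qed.

End RightClass.

Theorem V_factorization_system_of_intersections (E M : MorClass B) :
  cotensored B ->
  V_prefactorization_system B E M ->
  (forall X Y (m : U0 B X Y), M X Y m -> MonoV B m) ->
  has_V_intersections B M ->
  has_V_pullbacks_of B M ->
  V_factorization_system B E M.
Proof.
  intros Hcot [HdE HuM] Hmono Hint Hpb.
  split; [split; assumption|]. intros X Y f.
  destruct (least_factorization_exists M (right_class_intersection E M HdE) Hint X Y f)
    as [P [e [m [Hf Hleast]]]].
  exists P, e, m. split; [|split; [exact (proj1 Hleast) | exact Hf]].
  apply HuM. intros B1 B2 m' Hm'.
  apply (orthV_of_cotensor_lifting e m' Hcot (Hmono _ _ _ Hm')).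
  intros Q P1 k1 P2 k2 g Hc1 Hc2 Hg.
  apply (lifting0_of_least_factorization M Hmono (right_class_comp E M HdE)
           (right_class_pullback E M HdE Hpb) e m g Hleast).
  exact (right_class_cotensor E M HdE Q B1 B2 P1 P2 k1 k2 m' g Hc1 Hc2 Hg Hm').
Qed.

(* [N] is [downV] of [Sigma] together with [E], hence again the right class of a
   prefactorization system. *)
Lemma V_prefactorization_system_restrict (E M Sigma : MorClass B) :
  V_prefactorization_system B E M ->
  let N : MorClass B := fun X Y m => downV B Sigma X Y m /\ M X Y m in
  V_prefactorization_system B (upV B N) N.
Proof.
  intros [HdE HuM] N. split; [|intros X Y m; reflexivity].
  intros X Y m. split.
  - intro Hd. split.
    + intros A1 A2 e He. apply Hd. intros B1 B2 m' [Hm' _]. exact (Hm' _ _ e He).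
    + apply HdE. intros A1 A2 e He. apply Hd. intros B1 B2 m' [_ Hm'].
      exact (proj2 (HuM _ _ _) He _ _ m' Hm').
  - intros Hm A1 A2 e He. exact (He _ _ m Hm).
Qed.

End Factorization.

Theorem corollary7p4 (V : Cat) (W : SMC V) (B : VCat W) (E M : MorClass B) :
  cotensored B ->
  V_prefactorization_system B E M ->
  (forall X Y (m : U0 B X Y), M X Y m -> MonoV B m) ->
  has_V_intersections B M ->
  has_V_pullbacks_of B M ->
  V_factorization_system B E M /\
  (forall Sigma : MorClass B,
     let N : MorClass B := fun X Y m => downV B Sigma X Y m /\ M X Y m in
     V_factorization_system B (upV B N) N).
Proof.
  intros Hcot Hpre Hmono Hint Hpb. split.
  { exact (V_factorization_system_of_intersections B E M Hcot Hpre Hmono Hint Hpb). }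
  intros Sigma N. apply V_factorization_system_of_intersections.
  - exact Hcot.
  - exact (V_prefactorization_system_restrict B E M Sigma Hpre).
  - intros X Y m [_ Hm]. exact (Hmono X Y m Hm).
  - intros I C A m Hm. apply Hint. intro i. exact (proj2 (Hm i)).
  - intros X Y Z m f [_ Hm]. exact (Hpb X Y Z m f Hm).
Qed.
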